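(* Let $G$ be a finite group. Then the deep commuting graph $\Delta_D(G)$ is complete if and only if $G$ is cyclic.
   Context: For a finite group $G$, let $M(G)$ denote its Schur multiplier. A Schur cover of $G$ is a group $\tilde{G}$ with a central extension $\{e\}\to M(G)\xrightarrow{\iota}\tilde{G}\xrightarrow{\pi}G\to\{e\}$ such that $\iota(M(G))\subseteq Z(\tilde{G})\cap[\tilde{G},\tilde{G}]$ (a stem extension) and $\tilde G$ has the maximal possible order among such stem extensions. The deep commuting graph $\Delta_D(G)$ is the simple graph with vertex set $G$ in which two distinct vertices $x,y$ are adjacent if and only if preimages of $x$ and $y$ under $\pi$ commute in $\tilde{G}$; this does not depend on the choice of Schur cover or of the preimages. *)

From mathcomp Require Import all_boot all_fingroup all_solvable.
Set Implicit Arguments. Unset Strict Implicit. Unset Printing Implicit Defensive.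
Local Open Scope group_scope.

Definition stem_extension (gT hT : finGroupType) (G : {set gT})
    (H : {group hT}) (f : {morphism H >-> gT}) : Prop :=
  f @* H = G /\ 'ker f \subset 'Z(H) :&: H^`(1).

(* A Schur cover of G: a stem extension of maximal possible order among
   all stem extensions of G (its kernel is then isomorphic to M(G)). *)
Definition schur_cover (gT hT : finGroupType) (G : {set gT})
    (H : {group hT}) (f : {morphism H >-> gT}) : Prop :=
  stem_extension G f /\
  forall (kT : finGroupType) (K : {group kT}) (g : {morphism K >-> gT}),
    stem_extension G g -> #|K| <= #|H|.

(* Adjacency in the deep commuting graph, computed in the Schur cover (H, f):
   x <> y and some (equivalently every) preimages of x, y commute. *)
Definition deep_adj (gT hT : finGroupType) (H : {group hT})
    (f : {morphism H >-> gT}) (x y : gT) : Prop :=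
  x != y /\ exists a b, [/\ a \in H, b \in H, f a = x, f b = y & commute a b].

Definition deep_complete (gT hT : finGroupType) (G : {set gT})
    (H : {group hT}) (f : {morphism H >-> gT}) : Prop :=
  forall x y, x \in G -> y \in G -> x != y -> deep_adj f x y.

From HB Require Import structures.
From mathcomp Require Import all_boot all_fingroup all_solvable all_algebra mxabelem.
From mathcomp Require Import ring.
Set Implicit Arguments. Unset Strict Implicit. Unset Printing Implicit Defensive.
Import GRing.Theory.

(* Preimages in the Schur cover H of two elements of G are determined up to
   central factors, so the deep commuting graph is complete exactly when H is
   abelian.  If G = <[g]>, preimages of powers of g are powers of one preimage
   of g, and commute.  Conversely, if H is abelian then its kernel, lying in
   H', is trivial, so G is isomorphic to H and abelian.  A noncyclic abelian G
   maps onto an elementary abelian group of rank at least 2; two independent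
   coordinates alpha, beta : G -> 'F_p of that map define the cocycle
   alpha(x) beta(y), whose extension of G by 'F_p is a stem extension of order
   p |G| > |H|, contradicting the maximality of H. *)

Local Open Scope group_scope.

Section CentralKernel.
Variables (gT hT : finGroupType) (H : {group hT}) (f : {morphism H >-> gT}).
Hypothesis kerZ : 'ker f \subset 'Z(H).

Lemma commute_fibres a b a' b' :
    a \in H -> b \in H -> a' \in H -> b' \in H ->
  f a = f a' -> f b = f b' -> commute a' b' -> commute a b.
Proof.
move=> Ha Hb Ha' Hb' fa fb ca'b'.
have /rcosetP[k ker_k ->] : a \in 'ker f :* a' by apply/rcoset_kerP.
have /rcosetP[l ker_l ->] : b \in 'ker f :* b' by apply/rcoset_kerP.
have ker_cent (u z : hT) : u \in H -> z \in 'ker f -> commute u z.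
  by move=> Hu kz; apply: (centerC Hu); apply: (subsetP kerZ).
apply: commuteM; apply: commute_sym; apply: commuteM.
- exact: ker_cent (dom_ker ker_l) ker_k.
- exact: esym (ker_cent _ _ Ha' ker_l).
- exact: ker_cent Hb' ker_k.
- exact: esym ca'b'.
Qed.

Variable G : {set gT}.
Hypothesis imH : f @* H = G.

Lemma cyclic_deep_complete : cyclic G -> deep_complete G f.
Proof.
have lift z : z \in G -> exists2 a, a \in H & f a = z.
  by rewrite -imH => /morphimP[a _ Ha ->]; exists a.
case/cyclicP=> g defG x y Gx Gy neq_xy; split=> //.
have [h Hh fh] : exists2 h, h \in H & f h = g by apply: lift; rewrite defG cycle_id.
have [a Ha fa] := lift x Gx; have [b Hb fb] := lift y Gy.
exists a, b; split=> //.
move: Gx Gy; rewrite defG => /cycleP[i def_x] /cycleP[j def_y].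
apply: (commute_fibres Ha Hb (groupX i Hh) (groupX j Hh)); last exact: commuteX2.
  by rewrite fa def_x morphX // fh.
by rewrite fb def_y morphX // fh.
Qed.

Lemma deep_complete_abelian : deep_complete G f -> abelian H.
Proof.
move=> complete; apply/centsP=> a Ha b Hb.
have [eq_fab | neq_fab] := eqVneq (f a) (f b).
  by apply: (commute_fibres Ha Hb Ha Ha) => //; apply: commute_refl.
have Gfa : f a \in G by rewrite -imH mem_morphim.
have Gfb : f b \in G by rewrite -imH mem_morphim.
have [_ [a' [b' [Ha' Hb' fa' fb' ca'b']]]] := complete _ _ Gfa Gfb neq_fab.
exact: commute_fibres Ha Hb Ha' Hb' (esym fa') (esym fb') ca'b'.
Qed.
End CentralKernel.

Lemma additive_hom1 (aT : finGroupType) (V : zmodType) (g : aT -> V) :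
  {morph g : x y / x * y >-> (x + y)%R} -> g 1 = 0%R.
Proof. by move=> gM; apply: (@addrI _ (g 1)); rewrite -gM mulg1 addr0. Qed.

Record hom_pair (aT : finGroupType) (p : nat) := HomPair {
  alpha : aT -> 'F_p;
  beta : aT -> 'F_p;
  alphaM : {morph alpha : x y / x * y >-> (x + y)%R};
  betaM : {morph beta : x y / x * y >-> (x + y)%R}
}.

(* The central extension of aT by 'F_p with 2-cocycle (x, y) |-> alpha x * beta y;
   for aT = 'F_p^2 and the coordinate maps it is the Heisenberg group. *)
Definition heis (aT : finGroupType) p (B : hom_pair aT p) : Type := (aT * 'F_p)%type.
HB.instance Definition _ aT p (B : hom_pair aT p) := Finite.on (heis B).

Section HeisGroup.
Variables (aT : finGroupType) (p : nat) (B : hom_pair aT p).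
Local Open Scope ring_scope.

Definition heis_mul (u v : heis B) : heis B :=
  ((u.1 * v.1)%g, u.2 + v.2 + alpha B u.1 * beta B v.1).
Definition heis_one : heis B := (1%g, 0).
Definition heis_inv (u : heis B) : heis B :=
  ((u.1^-1)%g, - u.2 - alpha B (u.1^-1)%g * beta B u.1).

Lemma alpha1 : alpha B 1%g = 0. Proof. exact: additive_hom1 (alphaM B). Qed.
Lemma beta1 : beta B 1%g = 0. Proof. exact: additive_hom1 (betaM B). Qed.

Lemma heis_mulA : associative heis_mul.
Proof.
move=> [x a] [y b] [z c]; rewrite /heis_mul /= mulgA alphaM betaM.
by congr pair; ring.
Qed.

Lemma heis_mul1 : left_id heis_one heis_mul.
Proof. by move=> [x a]; rewrite /heis_mul /= mul1g alpha1 mul0r add0r addr0. Qed.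

Lemma heis_mulV : left_inverse heis_one heis_inv heis_mul.
Proof. by move=> [x a]; rewrite /heis_mul /heis_one /= mulVg; congr pair; ring. Qed.

End HeisGroup.

HB.instance Definition _ aT p (B : hom_pair aT p) :=
  Finite_isGroup.Build (heis B) (@heis_mulA aT p B) (@heis_mul1 aT p B) (@heis_mulV aT p B).

Lemma heis_mulE aT p (B : hom_pair aT p) (u v : heis B) :
  u * v = ((u.1 * v.1)%g, (u.2 + v.2 + alpha B u.1 * beta B v.1)%R).
Proof. by []. Qed.

Section HeisStem.
Variables (gT : finGroupType) (G : {group gT}) (p : nat) (B : hom_pair (subg_of G) p).

Definition heis_proj (u : heis B) : gT := sgval u.1.

Lemma heis_projM : {in [set: heis B] &, {morph heis_proj : u v / u * v}}.
Proof. by []. Qed.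
Canonical heis_proj_morphism := Morphism heis_projM.

Lemma card_heis : #|[set: heis B]| = (#|G| * #|'F_p|)%N.
Proof. by rewrite cardsT card_prod card_sub. Qed.

Lemma im_heis_proj : heis_proj_morphism @* [set: heis B] = G.
Proof.
apply/eqP; rewrite eqEsubset; apply/andP; split.
  by apply/subsetP=> z /morphimP[u _ _ ->]; apply: subgP.
apply/subsetP=> z Gz; apply/morphimP; exists ((subg G z, 0%R) : heis B) => //.
by rewrite /= /heis_proj /= subgK.
Qed.

Lemma ker_heis_proj : 'ker heis_proj_morphism = [set u : heis B | u.1 == 1].
Proof.
apply/setP=> -[x z]; rewrite !inE /= /heis_proj /=.
by apply/eqP/eqP=> [x1 | ->] //; apply: val_inj.
Qed.

Lemma heis_center (z : 'F_p) : ((1, z) : heis B) \in 'Z([set: heis B]).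
Proof.
rewrite inE inE /=; apply/centP=> v _; rewrite /commute !heis_mulE /= mulg1 mul1g.
by rewrite alpha1 beta1 mul0r mulr0 addr0 addr0 addrC.
Qed.

Lemma heis_commutator (x y : subg_of G) : commute x y ->
  [~ ((x, 0%R) : heis B), (y, 0%R)] = (1, (alpha B x * beta B y - alpha B y * beta B x)%R).
Proof.
move=> cxy; apply: (mulgI (((y, 0%R) : heis B) * (x, 0%R))).
rewrite -commgC !heis_mulE /= cxy mulg1 beta1; congr pair; ring.
Qed.

Lemma heis_central_expg (z : 'F_p) (k : nat) : ((1, z) : heis B) ^+ k = (1, (z *+ k)%R).
Proof.
elim: k => [|k IHk] //.
by rewrite expgS IHk heis_mulE /= mulg1 alpha1 mul0r addr0 mulrS.
Qed.

Lemma stem_extension_heis (x y : subg_of G) : commute x y ->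
  (alpha B x * beta B y != alpha B y * beta B x)%R ->
  stem_extension G heis_proj_morphism.
Proof.
move=> cxy; rewrite -subr_eq0 => nz_d; split; first exact: im_heis_proj.
apply/subsetP=> -[x1 z]; rewrite ker_heis_proj inE /= => /eqP->.
rewrite inE heis_center derg1 /=.
set d := (_ - _)%R in nz_d.
(* z = d *+ val (z / d): every element of the prime field 'F_p is a multiple of 1. *)
have -> : ((1, z) : heis B) = [~ ((x, 0%R) : heis B), (y, 0%R)] ^+ val (z / d)%R.
  by rewrite heis_commutator // heis_central_expg -mulr_natr natr_Zp mulrC divfK.
by rewrite groupX // mem_commg ?inE.
Qed.

End HeisStem.

Lemma noncyclic_abelian_abelem_quotient (gT : finGroupType) (G : {group gT}) :
    abelian G -> ~~ cyclic G ->
  exists p, exists2 N : {group gT},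
    G \subset 'N(N) & p.-abelem (G / N) /\ 1 < logn p #|G / N|.
Proof.
move=> abG ncG; have [p p_pr rG] := rank_witness G.
have [E EpE] : exists E, E \in 'E_p^2(G).
  by apply/p_rank_geP; rewrite -rG ltnNge -abelian_rank1_cyclic.
have [sEG abelE _] := pnElemP EpE.
pose expp := Morphism (fun x y Gx Gy => expgMn p (centsP abG x Gx y Gy)).
set K := 'ker expp; set N := (expp @* G)%G.
have sNG : N \subset G by apply/subsetP=> y /morphimP[x _ Gx ->]; apply: groupX.
have nNG : G \subset 'N(N) by apply: sub_abelian_norm.
have abelQ : p.-abelem (G / N).
  apply/abelemP=> //; split; first exact: quotient_abelian.
  move=> q /morphimP[x Nx Gx ->]; rewrite -morphX //.
  by apply: coset_id; apply: mem_morphim.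
have card_GN : #|G / N| = #|K|.
  apply/eqP; rewrite -(eqn_pmul2l (cardG_gt0 N)) card_quotient // Lagrange //.
  by rewrite card_morphim setIid mulnC Lagrange ?subsetIl.
have sEK : E \subset K.
  apply/subsetP=> x Ex; apply/kerP; first exact: subsetP sEG x Ex.
  by case/abelemP: abelE => // _; apply.
exists p, N => //; split=> //.
rewrite -(leq_exp2l _ _ (prime_gt1 p_pr)) -card_pgroup ?(abelem_pgroup abelQ) //.
by rewrite card_GN -(card_pnElem EpE) subset_leq_card.
Qed.

Lemma abelem_quotient_hom_pair (gT : finGroupType) (G N : {group gT}) (p : nat) :
    G \subset 'N(N) -> p.-abelem (G / N) -> 1 < logn p #|G / N| ->
  exists B : hom_pair (subg_of G) p, exists x y,
    (alpha B x * beta B y != alpha B y * beta B x)%R.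
Proof.
move=> nNG abelQ logQ.
have ntQ : G / N != 1 by apply: contraTneq logQ => ->; rewrite cards1 logn1.
pose ErV := abelem_rV abelQ ntQ.
have dimQ : 1 < 'dim (G / N) by rewrite (dim_abelemE abelQ ntQ).
pose coord i (u : subg_of G) := ErV (coset N (val u)) ord0 i.
have coordM i : {morph coord i : u v / u * v >-> (u + v)%R}.
  move=> u v; rewrite /coord /= morphM ?(subsetP nNG) ?subgP //.
  by rewrite /ErV abelem_rV_M ?mem_quotient ?subgP // mxE.
exists (HomPair (coordM (Ordinal (ltnW dimQ))) (coordM (Ordinal dimQ))).
have lift i : exists x : subg_of G, ErV (coset N (val x)) = delta_mx ord0 i.
  have /morphimP[g _ Gg def_g] := mem_rVabelem abelQ ntQ (delta_mx ord0 i).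
  by exists (subg G g); rewrite subgK // -def_g /ErV rVabelemK.
have [x Ex] := lift (Ordinal (ltnW dimQ)); have [y Ey] := lift (Ordinal dimQ).
by exists x, y; rewrite /= /coord Ex Ey !mxE.
Qed.

Lemma noncyclic_abelian_large_stem (gT : finGroupType) (G : {group gT}) :
    abelian G -> ~~ cyclic G ->
  exists (kT : finGroupType) (K : {group kT}) (g : {morphism K >-> gT}),
    stem_extension G g /\ #|G| < #|K|.
Proof.
move=> abG ncG.
have [p [N nNG [abelQ logQ]]] := noncyclic_abelian_abelem_quotient abG ncG.
have [B [x [y nondeg]]] := abelem_quotient_hom_pair nNG abelQ logQ.
exists (heis B), [set: heis B]%G, (heis_proj_morphism B); split.
  apply: stem_extension_heis nondeg; apply: val_inj.
  exact: (centsP abG) _ (subgP x) _ (subgP y).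
by rewrite card_heis ltn_Pmulr ?card_finNzRing_gt1.
Qed.

Theorem theorem3p3 (gT : finGroupType) (G : {group gT})
    (hT : finGroupType) (H : {group hT}) (f : {morphism H >-> gT}) :
  schur_cover G f -> (deep_complete G f <-> cyclic G).
Proof.
move=> [[imH kerH] maxH].
have kerZ : 'ker f \subset 'Z(H) := subset_trans kerH (subsetIl _ _).
split=> [complete | ]; last exact: cyclic_deep_complete.
have abH : abelian H := deep_complete_abelian kerZ imH complete.
have injf : 'injm f.
  by apply: subset_trans kerH _; rewrite (derG1P abH) subsetIr.
have cardG : #|G| = #|H| by rewrite -imH card_injm.
apply: contraT => ncG.
have abG : abelian G by rewrite -imH morphim_abelian.
have [kT [K [g [stem_g ltGK]]]] := noncyclic_abelian_large_stem abG ncG.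
by have := maxH _ _ _ stem_g; rewrite -cardG leqNgt ltGK.
Qed.
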